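(* Let $\mathbf p$ be a Nash-routing of a sum-bucket game and $\mathbf p^*$ an optimal routing. Then for every edge $e$ and every player $i\in\Pi_e(\mathbf p)$, $|f(e,i)|\ge1$.
   Context: A routing game $(\mathbf N,G,\mathcal P)$: players $\{1,\dots,N\}$ ($N\ge1$), a finite graph $G$, and for each player $i$ a nonempty finite set $\mathcal P_i$ of paths (each with at least one edge) from $u_i$ to $v_i$; $\mathcal P=\bigcup_i\mathcal P_i$, $L=\max_{p\in\mathcal P}|p|$. A routing is $\mathbf p=[p_1,\dots,p_N]$, $p_i\in\mathcal P_i$. Sum-bucket game: for $k=0,\dots,\lceil\lg L\rceil$ bucket $B_k$ = paths in $\mathcal P$ with length in $[2^k,2^{k+1})$, $B(q)$ = bucket index of $q$; normalized length $\overline D_q=2^{B(q)+1}-1$; $\overline C_{e,q}(\mathbf p)$ = number of players $j$ with $e\in p_j$ and $B(p_j)=B(q)$; $\overline C_q(\mathbf p)=\max_{e\in q}\overline C_{e,q}(\mathbf p)$; $\overline C_i=\overline C_{p_i}$, $\overline D_i=\overline D_{p_i}$; player cost $pc_i=\overline C_i+\overline D_i$; $\overline C(\mathbf p)=\max_i\overline C_i$, $\overline D(\mathbf p)=\max_i\overline D_i$; social cost $SC=\overline C+\overline D$. A Nash-routing: no player can strictly lower its cost by unilaterally changing its path within $\mathcal P_i$. An optimal routing $\mathbf p^*=[p_1^*,\dots,p_N^*]$ minimizes $SC$; $\overline D^*=\overline D(\mathbf p^* )$. $\Pi_e(\mathbf p)$ = set of players $i$ with $e\in p_i$. For $i\in\Pi_e(\mathbf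 p)$: $f(e,i)=\{e'\in p_i^*:\ \overline C_{e',p_i^*}(\mathbf p)\ge\overline C_{e,p_i}(\mathbf p)-\overline D^*\}$. *)

From mathcomp Require Import all_boot.
Set Implicit Arguments. Unset Strict Implicit. Unset Printing Implicit Defensive.

Definition is_gpath (V E : finType) (src tgt : E -> V) (u v : V) (q : seq E) : bool :=
  match q with
  | [::] => false
  | e :: q' =>
      [&& src e == u, path (fun a b => tgt a == src b) e q',
          tgt (last e q') == v & uniq (src e :: map tgt q)]
  end.

Definition routing_game (V E : finType) (src tgt : E -> V) (N : nat)
  (u v : 'I_N -> V) (P : 'I_N -> seq (seq E)) : Prop :=
  (0 < N) /\ forall i, P i != [::] /\ all (is_gpath src tgt (u i) (v i)) (P i).

Definition bucket (E : Type) (q : seq E) : nat := trunc_log 2 (size q).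

Definition Dbar (E : Type) (q : seq E) : nat := 2 ^ (bucket q).+1 - 1.

Definition is_routing (E : eqType) (N : nat) (P : 'I_N -> seq (seq E)) (p : 'I_N -> seq E)
  : Prop := forall i, p i \in P i.

Definition Cedge (E : finType) (N : nat) (p : 'I_N -> seq E) (e : E) (q : seq E) : nat :=
  #|[set j : 'I_N | (e \in p j) && (bucket (p j) == bucket q)]|.

Definition Cpath (E : finType) (N : nat) (p : 'I_N -> seq E) (q : seq E) : nat :=
  \max_(e <- q) Cedge p e q.

Definition pcost (E : finType) (N : nat) (p : 'I_N -> seq E) (i : 'I_N) : nat :=
  Cpath p (p i) + Dbar (p i).

Definition Cmax (E : finType) (N : nat) (p : 'I_N -> seq E) : nat :=
  \max_(i < N) Cpath p (p i).
Definition Dmax (E : finType) (N : nat) (p : 'I_N -> seq E) : nat :=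
  \max_(i < N) Dbar (p i).
Definition SC (E : finType) (N : nat) (p : 'I_N -> seq E) : nat := Cmax p + Dmax p.

Definition deviate (E : Type) (N : nat) (p : 'I_N -> seq E) (i : 'I_N) (q : seq E)
  : 'I_N -> seq E := fun j => if j == i then q else p j.

Definition is_nash (E : finType) (N : nat) (P : 'I_N -> seq (seq E)) (p : 'I_N -> seq E)
  : Prop :=
  is_routing P p /\
  forall i q, q \in P i -> pcost p i <= pcost (deviate p i q) i.

Definition is_optimal (E : finType) (N : nat) (P : 'I_N -> seq (seq E))
  (p : 'I_N -> seq E) : Prop :=
  is_routing P p /\ forall p', is_routing P p' -> SC p <= SC p'.

Definition Pi_e (E : finType) (N : nat) (p : 'I_N -> seq E) (e : E) : {set 'I_N} :=
  [set i | e \in p i].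

(* f(e,i) = { e2 in pstar_i : C_{e2,pstar_i}(p) >= C_{e,p_i}(p) - Dstar }, Dstar = D(pstar).
   The integer inequality  x >= y - d  is written  y <= x + d  over nat. *)
Definition fset (E : finType) (N : nat) (p pstar : 'I_N -> seq E) (e : E) (i : 'I_N)
  : {set E} :=
  [set e' | (e' \in pstar i) && (Cedge p e (p i) <= Cedge p e' (pstar i) + Dmax pstar)].

(* If i switched to its optimal path pstar_i, only
   i's own contribution would change, so every congestion on pstar_i would
   grow by at most one; hence the new congestion of i is at most
   C_{e',pstar_i}(p) + 1 for some edge e' of pstar_i (an edge realising the
   maximum).  The Nash condition then gives
     C_{e,p_i}(p) + 1 <= C_{e,p_i}(p) + Dbar(p_i) <= pc_i(p)
                      <= C_{e',pstar_i}(p) + 1 + Dbar(pstar_i)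
                      <= C_{e',pstar_i}(p) + 1 + Dbar*,
   using Dbar(p_i) >= 1, so e' belongs to f(e,i). *)

From mathcomp Require Import all_boot.
Set Implicit Arguments. Unset Strict Implicit. Unset Printing Implicit Defensive.

Lemma bigmax_seq_attained (T : eqType) (F : T -> nat) (s : seq T) :
  s != [::] -> exists2 x, x \in s & \max_(y <- s) F y = F x.
Proof.
elim: s => [//|a s IH] _; rewrite big_cons.
have [-> | s_ne] := eqVneq s [::].
  by exists a; rewrite ?mem_head // big_nil maxn0.
have [x xs ->] := IH s_ne.
have [le_ax | lt_xa] := leqP (F a) (F x).
  by exists x; rewrite ?inE ?xs ?orbT //; apply/maxn_idPr.
by exists a; rewrite ?mem_head //; apply/maxn_idPl; apply: ltnW.
Qed.

Lemma gpath_nonempty (V E : finType) (src tgt : E -> V) (u v : V) (q : seq E) :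
  is_gpath src tgt u v q -> q != [::].
Proof. by case: q. Qed.

Lemma Dbar_gt0 (E : Type) (q : seq E) : 0 < Dbar q.
Proof. by rewrite /Dbar subn_gt0 -{1}(expn0 2) ltn_exp2l. Qed.

Lemma deviate_self (E : Type) (N : nat) (p : 'I_N -> seq E) (i : 'I_N) (q : seq E) :
  deviate p i q i = q.
Proof. by rewrite /deviate eqxx. Qed.

Lemma Cedge_deviate (E : finType) (N : nat) (p : 'I_N -> seq E) (i : 'I_N)
    (q' q : seq E) (e : E) :
  Cedge (deviate p i q') e q <= (Cedge p e q).+1.
Proof.
rewrite /Cedge; set A := [set j | _ & bucket (p j) == bucket q].
have sub_iA : [set j | (e \in deviate p i q' j) &&
                       (bucket (deviate p i q' j) == bucket q)] \subset i |: A.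
  by apply/subsetP => j; rewrite !inE /deviate; case: (eqVneq j i) => //= _ ->.
apply: leq_trans (subset_leq_card sub_iA) _.
by rewrite cardsU1 addnC -addn1 leq_add2l leq_b1.
Qed.

Lemma Cpath_deviate (E : finType) (N : nat) (p : 'I_N -> seq E) (i : 'I_N)
    (q : seq E) :
  q != [::] -> exists2 e', e' \in q & Cpath (deviate p i q) q <= (Cedge p e' q).+1.
Proof.
move=> q_ne; have [e' e'q max_e'] :=
  bigmax_seq_attained (fun x => Cedge (deviate p i q) x q) q_ne.
by exists e'; rewrite // /Cpath max_e' Cedge_deviate.
Qed.

Lemma Cedge_le_Cpath (E : finType) (N : nat) (p : 'I_N -> seq E) (q : seq E) (e : E) :
  e \in q -> Cedge p e q <= Cpath p q.
Proof. by move=> e_q; apply: (@leq_bigmax_seq _ _ xpredT). Qed.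

Lemma Dbar_le_Dmax (E : finType) (N : nat) (p : 'I_N -> seq E) (i : 'I_N) :
  Dbar (p i) <= Dmax p.
Proof. by rewrite /Dmax; apply: (leq_bigmax i). Qed.

Lemma nash_deviation (E : finType) (N : nat) (P : 'I_N -> seq (seq E))
    (p : 'I_N -> seq E) (i : 'I_N) (q : seq E) :
  is_nash P p -> q \in P i ->
  Cpath p (p i) + Dbar (p i) <= Cpath (deviate p i q) q + Dbar q.
Proof. by move=> [_ nash] /(nash i); rewrite /pcost deviate_self. Qed.

Theorem mainTheorem12 (V E : finType) (src tgt : E -> V) (N : nat)
  (u v : 'I_N -> V) (P : 'I_N -> seq (seq E)) (p pstar : 'I_N -> seq E) :
  routing_game src tgt u v P ->
  is_nash P p ->
  is_optimal P pstar ->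
  forall (e : E) (i : 'I_N), i \in Pi_e p e -> 1 <= #|fset p pstar e i|.
Proof.
move=> [_ game] nash [opt_routing _] e i; rewrite inE => e_pi.
have pstar_in : pstar i \in P i := opt_routing i.
have pstar_ne : pstar i != [::].
  have [_ /allP paths] := game i.
  exact: gpath_nonempty (paths _ pstar_in).
have [e' e'_in dev_cong] := Cpath_deviate p i pstar_ne.
have nash_ineq := nash_deviation nash pstar_in.
have cong_e := Cedge_le_Cpath p e_pi.
have chain : Cedge p e (p i) + 1 <= (Cedge p e' (pstar i)).+1 + Dmax pstar.
  apply: leq_trans (leq_add cong_e (Dbar_gt0 (p i))) _.
  apply: leq_trans nash_ineq _.
  exact: leq_add dev_cong (Dbar_le_Dmax pstar i).
apply/card_gt0P; exists e'; rewrite inE e'_in /=.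
by rewrite addn1 addSn ltnS in chain.
Qed.
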